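(* Let $E\in\mathcal E^{m,n}_{a,b}$, $A\subseteq[m]$ and $B\subseteq[n]$, and let $E'=E\cup(A\times[n])\cup([m]\times B)$. Then $E'\in\mathcal E^{m,n}_{a',b'}$, where $a'=\min(a+|A|,m)$ and $b'=\min(b+|B|,n)$.
   Context: For an $(m,m-a)$-code $C_1$ and an $(n,n-b)$-code $C_2$, the tensor code $C_1\otimes C_2$ consists of $m\times n$ arrays whose columns lie in $C_1$ and rows in $C_2$. An erasure pattern $E\subseteq[m]\times[n]$ is correctable if every codeword is determined by its entries outside $E$. $\mathcal E^{m,n}_{a,b}$ (over a fixed field characteristic) is the set of patterns $E\subseteq[m]\times[n]$ correctable by an $(m,n,a,b)$-maximally recoverable tensor code, i.e. by $C_1\otimes C_2$ where $C_1,C_2$ have generic generator matrices of sizes $(m-a)\times m$ and $(n-b)\times n$; when $a=m$ or $b=n$ the code is zero and every pattern is correctable. *)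

From HB Require Import structures.
From mathcomp Require Import all_boot all_order all_algebra.
From mathcomp Require Import mpoly fraction.
Set Implicit Arguments. Unset Strict Implicit. Unset Printing Implicit Defensive.
Import GRing.Theory.
Local Open Scope ring_scope.

(* The tensor code C1 (x) C2, where C1 is the row space of G1 (length m) and
   C2 is the row space of G2 (length n): m x n arrays whose columns lie in C1
   and whose rows lie in C2. *)
Definition in_tensor_code (K : fieldType) (m n k1 k2 : nat)
  (G1 : 'M[K]_(k1, m)) (G2 : 'M[K]_(k2, n)) (M : 'M[K]_(m, n)) : Prop :=
  (forall j : 'I_n, ((col j M)^T <= G1)%MS) /\ (forall i : 'I_m, (row i M <= G2)%MS).

Definition correctable (K : fieldType) (m n k1 k2 : nat)
  (G1 : 'M[K]_(k1, m)) (G2 : 'M[K]_(k2, n)) (E : {set 'I_m * 'I_n}) : Prop :=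
  forall M1 M2 : 'M[K]_(m, n),
    in_tensor_code G1 G2 M1 -> in_tensor_code G1 G2 M2 ->
    (forall (i : 'I_m) (j : 'I_n), (i, j) \notin E -> M1 i j = M2 i j) ->
    M1 = M2.

(* Number of indeterminates: one per entry of G1 and of G2. *)
Definition nvars (m n a b : nat) : nat := ((m - a) * m + (n - b) * n)%N.

Definition genField (F : fieldType) (m n a b : nat) : fieldType :=
  {fraction {mpoly F[nvars m n a b]}}.

Definition genG1 (F : fieldType) (m n a b : nat) : 'M[genField F m n a b]_(m - a, m) :=
  \matrix_(i, j)
    (@FracField.tofrac _ ('X_(lshift ((n - b) * n) (mxvec_index i j)) : {mpoly F[nvars m n a b]})).

Definition genG2 (F : fieldType) (m n a b : nat) : 'M[genField F m n a b]_(n - b, n) :=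
  \matrix_(i, j)
    (@FracField.tofrac _ ('X_(rshift ((m - a) * m) (mxvec_index i j)) : {mpoly F[nvars m n a b]})).

(* E \in \mathcal E^{m,n}_{a,b} over the characteristic of F: correctable by the
   (m,n,a,b)-maximally recoverable tensor code, i.e. C1 (x) C2 with generic
   generator matrices of sizes (m-a) x m and (n-b) x n. *)
Definition MR_correctable (F : fieldType) (m n a b : nat) (E : {set 'I_m * 'I_n}) : Prop :=
  correctable (genG1 F m n a b) (genG2 F m n a b) E.
Arguments MR_correctable F m n a b E : clear implicits.

From HB Require Import structures.
From mathcomp Require Import all_boot all_order all_algebra.
From mathcomp Require Import mpoly fraction zify.
Set Implicit Arguments. Unset Strict Implicit. Unset Printing Implicit Defensive.
Import GRing.Theory.
Local Open Scope ring_scope.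

(* Inside the generic codes C1 and C2, take the subcodes of dimensions m - a'
   and n - b' that vanish on the coordinates in A and B (a dimension count).
   Their tensor product is contained in C1 (x) C2 and vanishes on
   (A x [n]) u ([m] x B), so it corrects E'.  For row-free generators,
   correctability of E' means that a polynomial matrix in the generator entries
   is row-free, i.e. has a nonzero maximal minor; as this holds at the
   shortened generators, it holds for generic ones. *)

(* The Kronecker product of G1 and G2 in the coordinates of mxvec. *)
Definition tensor_genmx (R : comPzRingType) (k1 k2 m n : nat)
    (G1 : 'M[R]_(k1, m)) (G2 : 'M[R]_(k2, n)) : 'M[R]_(k1 * k2, m * n) :=
  lin_mulmx G1^T *m lin_mulmxr G2.

Lemma mul_mxvec_tensor_genmx (R : comPzRingType) (k1 k2 m n : nat)
    (G1 : 'M[R]_(k1, m)) (G2 : 'M[R]_(k2, n)) (X : 'M[R]_(k1, k2)) :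
  mxvec X *m tensor_genmx G1 G2 = mxvec (G1^T *m X *m G2).
Proof. by rewrite mulmxA !mul_vec_lin. Qed.

Lemma map_tensor_genmx (R S : comPzRingType) (f : {rmorphism R -> S})
    (k1 k2 m n : nat) (G1 : 'M[R]_(k1, m)) (G2 : 'M[R]_(k2, n)) :
  map_mx f (tensor_genmx G1 G2) = tensor_genmx (map_mx f G1) (map_mx f G2).
Proof.
rewrite map_mxM (map_lin_mx (gf := mulmx (map_mx f G1)^T)).
  by rewrite (map_lin_mx (gf := mulmxr (map_mx f G2))) // => X; rewrite map_mxM.
by move=> X; rewrite map_mxM map_trmx.
Qed.

Definition unerased_index (m n : nat) (E : {set 'I_m * 'I_n})
    (k : 'I_#|~: E|) : 'I_(m * n) :=
  mxvec_index (enum_val k).1 (enum_val k).2.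

Definition unerased_genmx (R : comPzRingType) (k1 k2 m n : nat)
    (E : {set 'I_m * 'I_n}) (G1 : 'M[R]_(k1, m)) (G2 : 'M[R]_(k2, n)) :=
  colsub (@unerased_index m n E) (tensor_genmx G1 G2).

Lemma map_unerased_genmx (R S : comPzRingType) (f : {rmorphism R -> S})
    (k1 k2 m n : nat) (E : {set 'I_m * 'I_n})
    (G1 : 'M[R]_(k1, m)) (G2 : 'M[R]_(k2, n)) :
  map_mx f (unerased_genmx E G1 G2) = unerased_genmx E (map_mx f G1) (map_mx f G2).
Proof. by rewrite map_mxsub map_tensor_genmx. Qed.

Section TensorCode.
Variables (K : fieldType) (k1 k2 m n : nat).
Variables (G1 : 'M[K]_(k1, m)) (G2 : 'M[K]_(k2, n)).

Lemma tensor_codeP (M : 'M[K]_(m, n)) :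
  in_tensor_code G1 G2 M <-> exists X, M = G1^T *m X *m G2.
Proof.
split=> [[colsM rowsM] | [X ->]]; last first.
  split=> [j|i]; last by rewrite row_mul submxMl.
  by rewrite tr_col !trmx_mul trmxK row_mul mulmxA submxMl.
have /submxP [Y defMt] : (M^T <= G1)%MS by apply/row_subP => j; rewrite -tr_col.
have /mulmxKpV defM : (M <= G2)%MS by apply/row_subP.
exists (Y^T *m pinvmx G2).
by rewrite -defM -[M in LHS]trmxK defMt trmx_mul !mulmxA.
Qed.

Lemma tensor_coord_eq0 (X : 'M[K]_(k1, k2)) :
  row_free G1 -> row_free G2 -> G1^T *m X *m G2 = 0 -> X = 0.
Proof.
move=> free1 free2; rewrite -mulmxA => /(congr1 trmx).
rewrite trmx_mul trmxK trmx0 => /eqP; rewrite mulmx_free_eq0 // -trmx0.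
move=> /eqP /trmx_inj /eqP.
by rewrite mulmx_free_eq0 // => /eqP.
Qed.

Lemma unerased_genmxE (E : {set 'I_m * 'I_n}) (X : 'M[K]_(k1, k2)) k :
  (mxvec X *m unerased_genmx E G1 G2) 0 k
    = (G1^T *m X *m G2) (enum_val k).1 (enum_val k).2.
Proof. by rewrite mulmx_colsub mxE mul_mxvec_tensor_genmx mxvecE. Qed.

Lemma correctableE (E : {set 'I_m * 'I_n}) :
  row_free G1 -> row_free G2 ->
  correctable G1 G2 E <-> row_free (unerased_genmx E G1 G2).
Proof.
move=> free1 free2; split=> [corrE | freeE]; last first.
  move=> _ _ /tensor_codeP [X1 ->] /tensor_codeP [X2 ->] agree.
  congr (_ *m _ *m _); apply/eqP; rewrite -subr_eq0 -mxvec_eq0.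
  rewrite -(mulmx_free_eq0 _ freeE); apply/eqP/rowP => k.
  rewrite unerased_genmxE mulmxBr mulmxBl [LHS]mxE [X in _ + X]mxE.
  rewrite agree ?subrr ?mxE //.
  by have := enum_valP k; rewrite inE -surjective_pairing.
rewrite -kermx_eq0; apply/eqP/row_matrixP => i; rewrite row0.
set x := row i _; rewrite -(vec_mxK x); apply/eqP; rewrite mxvec_eq0; apply/eqP.
apply: tensor_coord_eq0 => //; apply: corrE; rewrite ?tensor_codeP.
- by exists (vec_mx x).
- by exists 0; rewrite mulmx0 mul0mx.
move=> i' j' unerased; have ij_unerased : (i', j') \in ~: E by rewrite inE.
have := unerased_genmxE (vec_mx x) (enum_rank_in ij_unerased (i', j')).
rewrite enum_rankK_in //= => <-.
by rewrite vec_mxK -row_mul mulmx_ker row0 !mxE.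
Qed.

End TensorCode.

Lemma row_free_colsub (K : fieldType) (p q r : nat) (h : 'I_r -> 'I_q)
    (A : 'M[K]_(p, q)) :
  row_free (colsub h A) -> row_free A.
Proof.
rewrite /row_free -mxrank_tr trmx_mxsub => /eqP rk_sub; apply/eqP/anti_leq.
by rewrite rank_leq_row -[X in (X <= _)%N]rk_sub -(mxrank_tr A) mxrankS ?rowsub_sub.
Qed.

Lemma row_free_map_inj (R : comNzRingType) (K1 K2 : fieldType)
    (f : {rmorphism R -> K1}) (g : {rmorphism R -> K2}) (p q : nat)
    (A : 'M[R]_(p, q)) :
  injective g -> row_free (map_mx f A) -> row_free (map_mx g A).
Proof.
(* A maximal minor that is nonzero under f is nonzero in R, hence under g. *)
move=> g_inj freeA.
have full_trA : row_full (map_mx f A)^T by rewrite /row_full mxrank_tr.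
pose h := fullrankfun full_trA.
have : colsub h (map_mx f A) \in unitmx.
  by rewrite -unitmx_tr trmx_mxsub fullrowsub_unit.
rewrite -map_mxsub unitmxE unitfE det_map_mx => det_neq0.
apply: (@row_free_colsub _ _ _ _ h).
rewrite row_free_unit -map_mxsub unitmxE unitfE det_map_mx.
apply: contra_neq det_neq0; rewrite -(rmorph0 g) => /g_inj ->.
by rewrite rmorph0.
Qed.

Lemma tofrac_inj (R : idomainType) : injective (@tofrac R).
Proof. by move=> x y /eqP; rewrite tofrac_eq => /eqP. Qed.

Lemma row_free_generic (F : fieldType) (N k m : nat)
    (idx : 'I_k -> 'I_m -> 'I_N) :
  injective (fun ij => idx ij.1 ij.2) -> (k <= m)%N ->
  row_free (map_mx (@tofrac _)
    (\matrix_(i, j) 'X_(idx i j) : 'M[{mpoly F[N]}]_(k, m))).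
Proof.
move=> idx_inj le_km.
(* Specialize the indeterminates on the leading diagonal to 1, the others to 0. *)
pose diag (l : 'I_N) : F := [exists i, l == idx i (widen_ord le_km i)]%:R.
apply: (row_free_map_inj (f := meval diag)); first exact: tofrac_inj.
suff -> : map_mx (meval diag) (\matrix_(i, j) 'X_(idx i j)) = pid_mx k.
  by rewrite /row_free rank_pid_mx.
apply/matrixP => i j; rewrite !mxE mevalXU ltn_ord andbT /diag.
case: existsP => [[i' /eqP diag_ij] | no_diag] /=.
  by case: (idx_inj (i, j) (i', _) diag_ij) => -> ->; rewrite eqxx.
have [ij | //] := eqVneq (val i) (val j); case: no_diag; exists i.
by rewrite (_ : j = widen_ord le_km i) //; apply: val_inj.
Qed.

Lemma shortened_subcode (K : fieldType) (k m l : nat) (G : 'M[K]_(k, m))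
    (A : {set 'I_m}) :
  (l <= \rank G - #|A|)%N ->
  exists H : 'M[K]_(l, m),
    [/\ row_free H, (H <= G)%MS & forall i j, j \in A -> H i j = 0].
Proof.
move=> le_rk.
(* The kernel of the projection onto the coordinates in A has codimension at
   most #|A|, so it meets the row space of G in rank at least l. *)
pose coordA : 'M[K]_(m, #|A|) := colsub enum_val 1%:M.
pose S := (G :&: kermx coordA)%MS.
have le_l_S : (l <= \rank S)%N.
  have := mxrank_sum_cap G (kermx coordA).
  have := rank_leq_col (G + kermx coordA)%MS.
  have := rank_leq_col coordA.
  rewrite mxrank_ker -/S; lia.
pose H : 'M[K]_(l, m) := pid_mx l *m row_base S.
have sHS : (H <= S)%MS by rewrite (submx_trans (submxMl _ _)) ?eq_row_base.
exists H; split.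
- by rewrite /row_free mxrankMfree ?row_base_free ?rank_pid_mx.
- exact: submx_trans sHS (capmxSl _ _).
move=> i j jA.
have /sub_kermxP /matrixP /(_ i (enum_rank_in jA j)) := submx_trans sHS (capmxSr _ _).
by rewrite mulmx_colsub mulmx1 !mxE enum_rankK_in.
Qed.

Lemma submx_vanish (K : fieldType) (k n : nat) (H : 'M[K]_(k, n))
    (B : {set 'I_n}) (v : 'rV[K]_n) j :
  (forall i j', j' \in B -> H i j' = 0) -> (v <= H)%MS -> j \in B -> v 0 j = 0.
Proof.
move=> vanB /submxP [D ->] jB; rewrite mxE big1 // => i _.
by rewrite vanB ?mulr0.
Qed.

Lemma in_tensor_codeS (K : fieldType) (k1 k2 l1 l2 m n : nat)
    (G1 : 'M[K]_(k1, m)) (G2 : 'M[K]_(k2, n))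
    (H1 : 'M[K]_(l1, m)) (H2 : 'M[K]_(l2, n)) (M : 'M[K]_(m, n)) :
  (H1 <= G1)%MS -> (H2 <= G2)%MS ->
  in_tensor_code H1 H2 M -> in_tensor_code G1 G2 M.
Proof.
move=> sHG1 sHG2 [colsM rowsM].
by split=> [j|i]; [exact: submx_trans (colsM j) sHG1 | exact: submx_trans (rowsM i) sHG2].
Qed.

Lemma correctable_shortened (K : fieldType) (k1 k2 l1 l2 m n : nat)
    (G1 : 'M[K]_(k1, m)) (G2 : 'M[K]_(k2, n))
    (H1 : 'M[K]_(l1, m)) (H2 : 'M[K]_(l2, n))
    (E : {set 'I_m * 'I_n}) (A : {set 'I_m}) (B : {set 'I_n}) :
  (H1 <= G1)%MS -> (H2 <= G2)%MS ->
  (forall i j, j \in A -> H1 i j = 0) -> (forall i j, j \in B -> H2 i j = 0) ->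
  correctable G1 G2 E ->
  correctable H1 H2 (E :|: setX A [set: 'I_n] :|: setX [set: 'I_m] B).
Proof.
move=> sHG1 sHG2 vanA vanB corrE M1 M2 codeM1 codeM2 agree.
apply: corrE; [exact: in_tensor_codeS codeM1 | exact: in_tensor_codeS codeM2 |].
have vanAB M i j : in_tensor_code H1 H2 M -> (i \in A) || (j \in B) -> M i j = 0.
  case=> colsM rowsM /orP [iA | jB].
    by have := submx_vanish vanA (colsM j) iA; rewrite !mxE.
  by have := submx_vanish vanB (rowsM i) jB; rewrite !mxE.
move=> i j ijNE; have [iAjB | iAjBN] := boolP ((i \in A) || (j \in B)).
  by rewrite !vanAB.
by apply: agree; rewrite !inE /= andbT -orbA negb_or ijNE.
Qed.

Lemma mxvec_index_inj (m n : nat) :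
  injective (fun ij : 'I_m * 'I_n => mxvec_index ij.1 ij.2).
Proof. by move=> [i j] [i' j'] /cast_ord_inj /enum_rank_inj. Qed.

Section GenericMatrices.
Variables (F : fieldType) (m n a b : nat).

Definition genP1 : 'M[{mpoly F[nvars m n a b]}]_(m - a, m) :=
  \matrix_(i, j) 'X_(lshift ((n - b) * n) (mxvec_index i j)).

Definition genP2 : 'M[{mpoly F[nvars m n a b]}]_(n - b, n) :=
  \matrix_(i, j) 'X_(rshift ((m - a) * m) (mxvec_index i j)).

Lemma genG1E : genG1 F m n a b = map_mx (@tofrac _) genP1.
Proof. by apply/matrixP => i j; rewrite !mxE. Qed.

Lemma genG2E : genG2 F m n a b = map_mx (@tofrac _) genP2.
Proof. by apply/matrixP => i j; rewrite !mxE. Qed.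

Lemma genG1_free : row_free (genG1 F m n a b).
Proof.
rewrite genG1E; apply: row_free_generic; last exact: leq_subr.
by move=> ij ij' /lshift_inj /mxvec_index_inj.
Qed.

Lemma genG2_free : row_free (genG2 F m n a b).
Proof.
rewrite genG2E; apply: row_free_generic; last exact: leq_subr.
by move=> ij ij' /rshift_inj /mxvec_index_inj.
Qed.

Lemma MR_correctable_of_instance (K : fieldType) (phi : {rmorphism F -> K})
    (E : {set 'I_m * 'I_n}) (H1 : 'M[K]_(m - a, m)) (H2 : 'M[K]_(n - b, n)) :
  row_free H1 -> row_free H2 -> correctable H1 H2 E -> MR_correctable F m n a b E.
Proof.
move=> free1 free2 /(correctableE _ free1 free2) freeE.
rewrite /MR_correctable correctableE ?genG1_free ?genG2_free //.
pose subst l := match split l with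
                | inl l1 => mxvec H1 0 l1 | inr l2 => mxvec H2 0 l2 end.
rewrite genG1E genG2E -map_unerased_genmx.
apply: (row_free_map_inj (f := mmap phi subst)); first exact: tofrac_inj.
suff [substH1 substH2] : map_mx (mmap phi subst) genP1 = H1 /\
                         map_mx (mmap phi subst) genP2 = H2.
  by rewrite map_unerased_genmx substH1 substH2.
split; apply/matrixP => i j; rewrite !mxE mmapX mmap1U /subst.
  by rewrite (unsplitK (inl _ _)) mxvecE.
by rewrite (unsplitK (inr _ _)) mxvecE.
Qed.

End GenericMatrices.

Theorem lemma3p17 (F : fieldType) (m n a b : nat) (E : {set 'I_m * 'I_n})
  (A : {set 'I_m}) (B : {set 'I_n}) :
  MR_correctable F m n a b E ->
  MR_correctable F m n (minn (a + #|A|) m) (minn (b + #|B|) n)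
    (E :|: setX A [set: 'I_n] :|: setX [set: 'I_m] B).
Proof.
move=> corrE.
set a' := minn (a + #|A|) m; set b' := minn (b + #|B|) n.
have rk1 : (m - a' <= \rank (genG1 F m n a b) - #|A|)%N.
  by rewrite (eqP (genG1_free F m n a b)) /a'; lia.
have rk2 : (n - b' <= \rank (genG2 F m n a b) - #|B|)%N.
  by rewrite (eqP (genG2_free F m n a b)) /b'; lia.
have [H1 [free1 sHG1 vanA]] := shortened_subcode rk1.
have [H2 [free2 sHG2 vanB]] := shortened_subcode rk2.
apply: (MR_correctable_of_instance (@tofrac _ \o @mpolyC _ F) free1 free2).
exact: correctable_shortened sHG1 sHG2 vanA vanB corrE.
Qed.
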